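(* Let $n$ be a nonnegative integer, let $p,q$ be nonnegative integers, and let $a,c,a_1,\dots,a_p,b_1,\dots,b_q,x\in\mathbb{C}$ be such that none of $a,\,1+a-c,\,c,\,b_1,\dots,b_q$ is zero or a negative integer. Then \[ {}_{p+3}F_{q+3}\!\left(\left.{-n,\frac{a}{2},\frac{a+1}{2},a_1,\ldots,a_p \atop a,1+a-c,c,b_1,\ldots,b_q}\right| x\right) =\sum_{m=0}^n \frac{(-n)_m(a_1)_m\cdots(a_p)_m\left(\frac{x}{4}\right)^m}{m!\,(1+a-c)_m(b_1)_m\cdots(b_q)_m}\; {}_{p+1}F_{q+1}\!\left(\left.{-n+m,a_1+m,\ldots,a_p+m \atop c,b_1+m,\ldots,b_q+m}\right| \frac{x}{4}\right). \]
   Context: For $a\in\mathbb{C}$, the rising factorial is $(a)_0=1$ and $(a)_k=a(a+1)\cdots(a+k-1)$ for $k\ge1$. For nonnegative integers $r,s$, the hypergeometric series is ${}_rF_s\!\left(\left.{\alpha_1,\ldots,\alpha_r\atop \beta_1,\ldots,\beta_s}\right|z\right)=\sum_{k\ge0}\frac{(\alpha_1)_k\cdots(\alpha_r)_k}{k!(\beta_1)_k\cdots(\beta_s)_k}z^k$, where no lower parameter $\beta_j$ is zero or a negative integer. If some upper parameter equals $-n$ with $n$ a nonnegative integer, the series terminates (is a finite sum over $0\le k\le n$). *)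

From mathcomp Require Import all_boot all_algebra.
From mathcomp Require Import reals complex.
Set Implicit Arguments. Unset Strict Implicit. Unset Printing Implicit Defensive.
Import GRing.Theory.
Local Open Scope ring_scope.

Definition rising {F : fieldType} (a : F) (k : nat) : F :=
  \prod_(i < k) (a + i%:R).

Definition hyp_term {F : fieldType} (ups lows : seq F) (z : F) (k : nat) : F :=
  (\prod_(al <- ups) rising al k) / (k`!%:R * \prod_(be <- lows) rising be k)
    * z ^+ k.

(* When -N is one of the
   upper parameters (the terminating case of the paper), every term with
   k > N vanishes, so this is exactly the value of the terminating series
   rFs(ups; lows | z). *)
Definition hyp_sum {F : fieldType} (N : nat) (ups lows : seq F) (z : F) : F :=
  \sum_(k < N.+1) hyp_term ups lows z k.

Definition nonpos_int {F : fieldType} (x : F) : Prop :=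
  exists k : nat, x = - (k%:R).

(* Expanding the right-hand side as a double sum and collecting by total degree
   k = m + j, the x^k coefficients of both sides share every factor (u)_k, once
   (u)_k is split as (u)_m (u+m)_(k-m).  With b = 1 + a - c, what remains is
     (a/2)_k ((a+1)/2)_k 4^k / (k! (a)_k (b)_k (c)_k)
       = sum_m 1 / (m! (k-m)! (b)_m (c)_(k-m)).
   The duplication formula (a/2)_k ((a+1)/2)_k 4^k = (a)_(2k) = (a)_k (a+k)_k
   turns the left side into (a+k)_k / (k! (b)_k (c)_k), and after clearing
   denominators the right side is the Chu-Vandermonde convolution with all
   rising factorials reversed. *)
From mathcomp Require Import all_boot all_algebra.
From mathcomp Require Import reals complex.
From mathcomp Require Import ring.
Set Implicit Arguments. Unset Strict Implicit. Unset Printing Implicit Defensive.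
Import GRing.Theory Num.Theory.
Local Open Scope ring_scope.

Lemma sum_triangle (V : nmodType) N (g : nat -> nat -> V) :
  \sum_(m < N.+1) \sum_(j < (N - m)%N.+1) g m j
  = \sum_(k < N.+1) \sum_(m < k.+1) g m (k - m)%N.
Proof.
elim: N => [|N IH]; first by rewrite !big_ord1.
rewrite [RHS]big_ord_recr /= -IH.
under eq_bigr => m _ do rewrite big_ord_recr /=.
rewrite big_split /=; congr (_ + _).
rewrite big_ord_recr /= subnn big_ord0 addr0.
by apply: eq_bigr => m _; rewrite subSn // -ltnS.
Qed.

Section Rising.
Variable F : fieldType.
Implicit Types (a b c w z : F) (k l m : nat).

Lemma rising0 z : rising z 0 = 1.
Proof. by rewrite /rising big_ord0. Qed.

Lemma risingS z l : rising z l.+1 = rising z l * (z + l%:R).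
Proof. by rewrite /rising big_ord_recr. Qed.

Lemma risingD z l m : rising z (l + m)%N = rising z l * rising (z + l%:R) m.
Proof.
rewrite /rising big_split_ord /=; congr (_ * _).
by apply: eq_bigr => i _; rewrite natrD addrA.
Qed.

Lemma prod_risingD (s : seq F) l m :
  \prod_(z <- s) rising z (l + m)%N
  = \prod_(z <- s) rising z l * \prod_(z <- s) rising (z + l%:R) m.
Proof. by rewrite -big_split; apply: eq_bigr => z _; rewrite risingD. Qed.

Lemma rising_reflect w l : rising (w - l%:R + 1) l = (-1) ^+ l * rising (- w) l.
Proof.
rewrite /rising (reindex_inj rev_ord_inj) /=.
rewrite -[in (-1) ^+ l](card_ord l) -prodr_const -big_split /=.
by apply: eq_bigr => i _; rewrite /= natrB // -addn1 natrD; ring.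
Qed.

Lemma rising_neq0 z l : ~ nonpos_int z -> rising z l != 0.
Proof.
move=> z_nonpos; apply/prodf_neq0 => i _; apply/eqP => zi0; apply: z_nonpos.
by exists i; apply/eqP; rewrite -addr_eq0 zi0.
Qed.

Lemma rising_vandermonde b c k :
  rising (b + c) k = \sum_(m < k.+1) 'C(k, m)%:R * rising b m * rising c (k - m).
Proof.
elim: k => [|k IH]; first by rewrite big_ord1 !rising0 bin0 mulr1 mul1r.
rewrite risingS IH big_distrl /=.
transitivity (\sum_(m < k.+1) 'C(k, m)%:R * rising b m.+1 * rising c (k - m)
  + \sum_(m < k.+1) 'C(k, m)%:R * rising b m * rising c (k.+1 - m)).
  rewrite -big_split /=; apply: eq_bigr => -[m /= lt_mk] _.
  have le_mk : (m <= k)%N by rewrite -ltnS.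
  by rewrite risingS subSn // risingS natrB //; ring.
rewrite [RHS]big_ord_recl /= bin0 rising0 mulr1 mul1r subn0.
under [in RHS]eq_bigr => i _ do rewrite binS natrD subSS !mulrDl.
rewrite big_split /= addrA addrC; congr (_ + _).
rewrite [in LHS]big_ord_recl /= bin0 rising0 mulr1 mul1r subn0; congr (_ + _).
rewrite [in RHS]big_ord_recr /= bin_small // !mul0r addr0.
by apply: eq_bigr => i _; rewrite subSS.
Qed.

(* Chu-Vandermonde at [-(b + k - 1)] and [-(c + k - 1)], read backwards through
   [rising_reflect]. *)
Lemma rising_vandermonde_reflected b c k :
  \sum_(m < k.+1) 'C(k, m)%:R * rising (b + m%:R) (k - m) * rising (c + (k - m)%:R) m
  = rising (b + c + k%:R - 1) k.
Proof.
set w1 := b + k%:R - 1; set w2 := c + k%:R - 1.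
rewrite (_ : b + c + k%:R - 1 = (w1 + w2) - k%:R + 1); last by rewrite /w1 /w2; ring.
rewrite rising_reflect opprD addrC rising_vandermonde big_distrr.
apply: eq_bigr => -[m /= lt_mk] _; have le_mk : (m <= k)%N by rewrite -ltnS.
rewrite (_ : b + m%:R = w1 - (k - m)%:R + 1); last by rewrite natrB // /w1; ring.
rewrite (_ : c + (k - m)%:R = w2 - m%:R + 1); last by rewrite natrB // /w2; ring.
rewrite !rising_reflect -[in (-1) ^+ k](subnK le_mk) exprD; ring.
Qed.

Lemma rising_duplication a k : 2 != 0 :> F ->
  rising (a / 2) k * rising ((a + 1) / 2) k * 4 ^+ k = rising a k.*2.
Proof.
move=> two_neq0; elim: k => [|k IH]; first by rewrite !rising0 !mulr1.
rewrite doubleS !risingS exprS -IH -addnn !natrD.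
by field.
Qed.

End Rising.

Section CharZero.
Variable F : fieldType.
Hypothesis F_char0 : [pchar F] =i pred0.
Implicit Types (a b c u x z : F) (As Bs : seq F) (k m : nat).

Lemma natr_neq0 k : (0 < k)%N -> k%:R != 0 :> F.
Proof. by rewrite lt0n (pcharf0P _).1. Qed.

(* Multiplied by [k! (b)_k (c)_k], the m-th summand becomes the m-th term of
   [rising_vandermonde_reflected]. *)
Lemma sum_inv_fact_rising b c k : ~ nonpos_int b -> ~ nonpos_int c ->
  \sum_(m < k.+1) (m`!%:R * (k - m)`!%:R * rising b m * rising c (k - m))^-1
  = rising (b + c + k%:R - 1) k / (k`!%:R * rising b k * rising c k).
Proof.
move=> b_nonpos c_nonpos; rewrite -rising_vandermonde_reflected big_distrl.
apply: eq_bigr => -[m /= lt_mk] _; have le_mk : (m <= k)%N by rewrite -ltnS.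
have [Eb Ec] : rising b k = rising b m * rising (b + m%:R) (k - m)
               /\ rising c k = rising c (k - m) * rising (c + (k - m)%:R) m.
  by rewrite -!risingD subnKC // subnK.
have Efact : k`!%:R = 'C(k, m)%:R * (m`!%:R * (k - m)`!%:R) :> F.
  by rewrite -!natrM bin_fact.
have := rising_neq0 k b_nonpos; rewrite Eb mulf_eq0 negb_or => /andP[bm_neq0 bk_neq0].
have := rising_neq0 k c_nonpos; rewrite Ec mulf_eq0 negb_or => /andP[ck_neq0 cm_neq0].
have binF_neq0 : 'C(k, m)%:R != 0 :> F by rewrite natr_neq0 // bin_gt0.
rewrite Efact; field.
by rewrite bm_neq0 bk_neq0 ck_neq0 cm_neq0 binF_neq0 !natr_neq0 ?fact_gt0.
Qed.

Lemma shifted_term_mul u b c z As Bs k m : (m <= k)%N ->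
  (rising u m * (\prod_(al <- As) rising al m) * z ^+ m)
    / (m`!%:R * rising b m * \prod_(be <- Bs) rising be m)
    * hyp_term ((u + m%:R) :: [seq al + m%:R | al <- As])
               (c :: [seq be + m%:R | be <- Bs]) z (k - m)
  = rising u k * (\prod_(al <- As) rising al k) / (\prod_(be <- Bs) rising be k) * z ^+ k
    * (m`!%:R * (k - m)`!%:R * rising b m * rising c (k - m))^-1.
Proof.
move=> le_mk; rewrite /hyp_term !big_cons !big_map.
rewrite -(subnKC le_mk) !prod_risingD risingD exprD addKn !invfM.
ring.
Qed.

Lemma hyp_term_duplication u a c x As Bs k :
  ~ nonpos_int a -> ~ nonpos_int (1 + a - c) -> ~ nonpos_int c ->
  (forall b, b \in Bs -> ~ nonpos_int b) ->
  hyp_term ([:: u; a / 2; (a + 1) / 2] ++ As) ([:: a; 1 + a - c; c] ++ Bs) x k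
  = \sum_(m < k.+1)
      (rising u m * (\prod_(al <- As) rising al m) * (x / 4) ^+ m)
      / (m`!%:R * rising (1 + a - c) m * \prod_(be <- Bs) rising be m)
      * hyp_term ((u + m%:R) :: [seq al + m%:R | al <- As])
                 (c :: [seq be + m%:R | be <- Bs]) (x / 4) (k - m).
Proof.
move=> a_nonpos ac_nonpos c_nonpos Bs_nonpos.
rewrite (eq_bigr _ (fun (m : 'I_k.+1) _ =>
  shifted_term_mul u (1 + a - c) c (x / 4) As Bs (ltnSE (ltn_ord m)))).
rewrite -big_distrr /= sum_inv_fact_rising //.
have -> : 1 + a - c + c + k%:R - 1 = a + k%:R by ring.
have two_neq0 : 2 != 0 :> F by rewrite natr_neq0.
have four_k_neq0 : 4 ^+ k != 0 :> F by rewrite expf_neq0 // natr_neq0.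
have halves : rising (a / 2) k * rising ((a + 1) / 2) k
              = rising a k * rising (a + k%:R) k / 4 ^+ k.
  by rewrite -risingD addnn -rising_duplication // mulfK.
have Bs_neq0 : \prod_(be <- Bs) rising be k != 0.
  by rewrite prodf_seq_neq0; apply/allP => be /Bs_nonpos /rising_neq0 ->.
rewrite /hyp_term !big_cons expr_div_n [rising (a / 2) k * _]mulrA halves.
field.
by rewrite Bs_neq0 four_k_neq0 !rising_neq0 // natr_neq0 ?fact_gt0.
Qed.

End CharZero.

Theorem proposition3p1 (R : realType) (n : nat) (a c x : R[i]) (As Bs : seq R[i]) :
  ~ nonpos_int a -> ~ nonpos_int (1 + a - c) -> ~ nonpos_int c ->
  (forall b, b \in Bs -> ~ nonpos_int b) ->
  hyp_sum n ([:: - n%:R; a / 2; (a + 1) / 2] ++ As) ([:: a; 1 + a - c; c] ++ Bs) x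
  = \sum_(m < n.+1)
      (rising (- n%:R) m * (\prod_(al <- As) rising al m) * (x / 4) ^+ m)
      / (m`!%:R * rising (1 + a - c) m * \prod_(be <- Bs) rising be m)
      * hyp_sum (n - m) ((- n%:R + m%:R) :: [seq al + m%:R | al <- As])
                 (c :: [seq be + m%:R | be <- Bs]) (x / 4).
Proof.
move=> a_nonpos ac_nonpos c_nonpos Bs_nonpos.
pose coef m := (rising (- n%:R) m * (\prod_(al <- As) rising al m) * (x / 4) ^+ m)
  / (m`!%:R * rising (1 + a - c) m * \prod_(be <- Bs) rising be m).
pose inner_term m := hyp_term ((- n%:R + m%:R) :: [seq al + m%:R | al <- As])
                              (c :: [seq be + m%:R | be <- Bs]) (x / 4).
rewrite /hyp_sum; under [RHS]eq_bigr => m _ do rewrite big_distrr /=.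
rewrite (sum_triangle n (fun m j => coef m * inner_term m j)).
apply: eq_bigr => k _.
by rewrite (hyp_term_duplication (@pchar_num _)).
Qed.
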